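(* Let $h_1,\dots,h_{n-k}$ be the generators of a valid rate-$k/n$ quantum convolutional code whose memory commutativity matrix $\Omega$ is not full rank, and fix $m$-qubit memory operators $g_{i,j}$ consistent with $\Omega$ (i.e. $g_{i,j}\odot g_{i',j'}=[\Omega]_{(i,j),(i',j')}$). Let $C$ be the set of $m$-qubit Pauli operators commuting with all $g_{i,j}$, and suppose the set $S_1$ (defined in the context) is empty. Let $M_1,\dots,M_a$ be a complete basis of $C$ (with $a\le k$). Add to the encoding transformation the rows $$I^{\otimes m}\otimes I^{\otimes(n-k)}\otimes X_t\ \longrightarrow\ I^{\otimes n}\otimes M_t,\qquad t=1,\dots,a,$$ where $X_t$ is the Pauli $X$ on the $t$-th information qubit. Then every Clifford encoder implementing the encoding transformation together with these added rows is non-catastrophic.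
   Context: Pauli operators are considered up to phase; $A\odot B\in\{0,1\}$ is $1$ iff $A,B$ anticommute, additive mod 2 over tensor factors. The weight of a Pauli operator is its number of non-identity tensor factors. A rate-$k/n$ quantum convolutional code is given by $n-k$ generators $h_i=(h_{i,1}|\cdots|h_{i,l_i})$ of $n$-qubit Pauli operators (frames of $n$ qubits) and all their frame shifts; it is valid if all these pairwise commute, i.e. $\sum_r h_{i,r+t}\odot h_{i',r}=0$ for all $i,i',t$ (with $h_{i,j}=I^{\otimes n}$ outside $1\le j\le l_i$). Encoding transformation: a Clifford unitary $U$ acting on $m$ memory, $n-k$ ancilla and $k$ information qubits and outputting $n$ physical and $m$ memory qubits implements it if, for each $1\le i\le n-k$ and $0\le j\le l_i-1$, $U$ maps $g_{i,j}\otimes A_{i,j}\otimes I^{\otimes k}$ to $h_{i,j+1}\otimes g_{i,j+1}$ (up to phase), where $g_{i,0}=g_{i,l_i}=I^{\otimes m}$, $A_{i,0}=Z_i$ (Pauli $Z$ on the $i$-th ancilla), $A_{i,j}=I^{\otimes(n-k)}$ for $j\ge1$, and $g_{i,j}$ ($1\le j\le l_i-1$) are $m$-qubit Pauli operators. Each such requirement is a ''row'' (input $\to$ output); products of rows (multiplying inputs together and outputs together) are also input–output relations of $U$. Memory commutativity matrix $\Omega$: the symmetric binary matrix indexed by $(i,j)$, $1\le i\le n-k$, $1\le j\le l_i-1$, with entries $g_{i,j}\odot g_{i',j'}$, forced by consistency of commutation relations (for $j\ge j'$ they equal $\sum_{r\ge1}h_{i,j+r}\odot h_{i',j'+r}$);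 rank is over $\mathbb{F}_2$. $C$ is a group (modulo phases, an $\mathbb{F}_2$-vector space); a complete basis of $C$ is an independent generating set of it. $S_1$ is the set of nontrivial rows or products of rows of the encoding transformation of the form $M\otimes S^z\otimes L\to I^{\otimes n}\otimes M'$ with $M,M'\in C$, $S^z\in\{I,Z\}^{\otimes(n-k)}$ and $L$ an arbitrary $k$-qubit Pauli operator. State diagram of $U$: vertices are $m$-qubit Pauli operators; an edge $M\to M'$ labeled $(L,P)$ exists whenever $U$ maps $M\otimes S^z\otimes L$ to $P\otimes M'$ for some $S^z\in\{I,Z\}^{\otimes(n-k)}$, $k$-qubit Pauli $L$, $n$-qubit Pauli $P$. Physical (logical) weight of an edge is the weight of $P$ (of $L$). $U$ is catastrophic if there is a cycle in the state diagram all of whose edges have zero physical weight and at least one of whose edges has nonzero logical weight; otherwise non-catastrophic. *)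

From HB Require Import structures.
From mathcomp Require Import all_boot all_order all_algebra.
Set Implicit Arguments. Unset Strict Implicit. Unset Printing Implicit Defensive.
Import GRing.Theory.
Local Open Scope ring_scope.

(* n-qubit Pauli operator modulo phase: per qubit (x,z) in F_2^2.
   (0,0)=I, (1,0)=X, (0,1)=Z, (1,1)=Y.  0 is the identity operator,
   + is the product (modulo phases). *)
Definition Pauli (q : nat) := {ffun 'I_q -> 'F_2 * 'F_2}.

(* A (.) B : 1 iff A and B anticommute. *)
Definition sp (q : nat) (A B : Pauli q) : 'F_2 :=
  \sum_(i < q) ((A i).1 * (B i).2 + (A i).2 * (B i).1).

Definition weight (q : nat) (A : Pauli q) : nat := #|[set i | A i != 0]|.

Definition tens (a b : nat) (A : Pauli a) (B : Pauli b) : Pauli (a + b) :=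
  [ffun i => match split i with inl j => A j | inr j => B j end].

(* single-qubit Paulis Z_t, X_t on qubit t (t counted from 0) *)
Definition PZ (q : nat) (t : nat) : Pauli q :=
  [ffun i : 'I_q => if val i == t then (0, 1) else (0, 0)].
Definition PX (q : nat) (t : nat) : Pauli q :=
  [ffun i : 'I_q => if val i == t then (1, 0) else (0, 0)].

Definition Ztype (q : nat) (S : Pauli q) : bool := [forall i, (S i).1 == 0].

(* Clifford unitary modulo phases, from an N-qubit input register to an
   N'-qubit output register: its conjugation action on Paulis is an
   additive bijection preserving the symplectic form. *)
Definition clifford (N N' : nat) (U : Pauli N -> Pauli N') : Prop :=
  [/\ forall A B, U (A + B) = U A + U B,
      bijective U &
      forall A B, sp (U A) (U B) = sp A B].

Section Code.
Variables (n k : nat).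
(* generators h i j = h_{i+1,j}, with lengths l i = l_{i+1};
   hf forces h_{i,j} = I outside 1 <= j <= l_i *)
Variables (l : 'I_(n - k) -> nat) (h : 'I_(n - k) -> nat -> Pauli n).

Definition hf (i : 'I_(n - k)) (j : nat) : Pauli n :=
  if ((0 < j) && (j <= l i))%N then h i j else 0.

(* validity: all generators and their frame shifts commute *)
Definition valid_code : Prop :=
  forall (i i' : 'I_(n - k)) (t : nat),
    \sum_(r < (l i').+1) sp (hf i (r + t)) (hf i' r) = 0.

Definition Omega (i : 'I_(n - k)) (j : nat) (i' : 'I_(n - k)) (j' : nat) : 'F_2 :=
  if (j' <= j)%N
  then \sum_(1 <= r < (l i + l i').+1) sp (hf i (j + r)) (hf i' (j' + r))
  else \sum_(1 <= r < (l i + l i').+1) sp (hf i' (j' + r)) (hf i (j + r)).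

Definition OIdx :=
  {p : 'I_(n - k) * 'I_(\max_(i < n - k) l i) | (0 < p.2)%N && (p.2 < l p.1)%N}.

Definition Omega_mx : 'M['F_2]_(#|{: OIdx}|) :=
  \matrix_(a, b) let p := enum_val a in let q := enum_val b in
     Omega (val p).1 (val (val p).2) (val q).1 (val (val q).2).

Variable m : nat.
(* memory operators g i j = g_{i+1,j}; gf forces g_{i,0} = g_{i,l_i} = I
   (and I outside the range) *)
Variable g : 'I_(n - k) -> nat -> Pauli m.

Definition gf (i : 'I_(n - k)) (j : nat) : Pauli m :=
  if ((0 < j) && (j < l i))%N then g i j else 0.

Definition consistent_with_Omega : Prop :=
  forall (i i' : 'I_(n - k)) (j j' : nat),
    (0 < j < l i)%N -> (0 < j' < l i')%N ->
    sp (g i j) (g i' j') = Omega i j i' j'.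

Definition inC (M : Pauli m) : Prop :=
  forall (i : 'I_(n - k)) (j : nat), (0 < j < l i)%N -> sp M (g i j) = 0.

Definition Aanc (i : 'I_(n - k)) (j : nat) : Pauli (n - k) :=
  if j == 0%N then PZ (n - k) i else 0.

(* rows of the encoding transformation: for 0 <= j <= l_i - 1,
   g_{i,j} (x) A_{i,j} (x) I^k  -->  h_{i,j+1} (x) g_{i,j+1} *)
Definition row_in (i : 'I_(n - k)) (j : nat) : Pauli (m + (n - k) + k) :=
  tens (tens (gf i j) (Aanc i j)) 0.
Definition row_out (i : 'I_(n - k)) (j : nat) : Pauli (n + m) :=
  tens (hf i j.+1) (gf i j.+1).

Definition prod_in (c : 'I_(n - k) -> nat -> bool) : Pauli (m + (n - k) + k) :=
  \sum_(i < n - k) \sum_(j < l i | c i j) row_in i j.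
Definition prod_out (c : 'I_(n - k) -> nat -> bool) : Pauli (n + m) :=
  \sum_(i < n - k) \sum_(j < l i | c i j) row_out i j.

Definition inS1 (P : Pauli (m + (n - k) + k)) (Q : Pauli (n + m)) : Prop :=
  (exists c, P = prod_in c /\ Q = prod_out c) /\
  (P != 0 \/ Q != 0) /\
  exists (M : Pauli m) (S : Pauli (n - k)) (L : Pauli k) (M' : Pauli m),
    [/\ inC M, Ztype S, inC M',
        P = tens (tens M S) L & Q = tens 0 M'].

Definition S1_empty : Prop := forall P Q, ~ inS1 P Q.

Definition implements (U : Pauli (m + (n - k) + k) -> Pauli (n + m)) : Prop :=
  forall (i : 'I_(n - k)) (j : nat), (j < l i)%N -> U (row_in i j) = row_out i j.

End Code.

(* catastrophic: a closed walk in the state diagram, all of whose edges have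
   zero physical weight and at least one of which has nonzero logical weight *)
Definition catastrophic (n k m : nat)
    (U : Pauli (m + (n - k) + k) -> Pauli (n + m)) : Prop :=
  exists (N : nat) (s : nat -> Pauli m) (S : nat -> Pauli (n - k))
         (L : nat -> Pauli k) (P : nat -> Pauli n),
    [/\ (0 < N)%N, s N = s 0%N,
        forall t, (t < N)%N -> Ztype (S t) /\
          U (tens (tens (s t) (S t)) (L t)) = tens (P t) (s t.+1),
        forall t, (t < N)%N -> weight (P t) = 0%N &
        exists2 t, (t < N)%N & weight (L t) != 0%N].

Definition complete_basis_C (n k m : nat) (l : 'I_(n - k) -> nat)
    (g : 'I_(n - k) -> nat -> Pauli m) (a : nat) (M : 'I_a -> Pauli m) : Prop :=
  (forall t, inC l g (M t)) /\
  (forall P, inC l g P -> exists c : 'I_a -> bool, P = \sum_(t < a | c t) M t) /\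
  (forall c : 'I_a -> bool, \sum_(t < a | c t) M t = 0 -> forall t, c t = false).

(* Along a cycle of the state diagram whose physical outputs are all trivial,
   the fact that U preserves the symplectic form, applied against the rows
   [g_{i,j} ⊗ A_{i,j} ⊗ I -> h_{i,j+1} ⊗ g_{i,j+1}], passes commutation of the
   memory state with [g_{i,j}] on to commutation of the next memory state with
   [g_{i,j+1}].  Starting from [g_{i,0} = I] and going around the cycle, every
   memory state lies in C.  The added rows make every element of C the memory
   output of an input supported on the information qubits alone, so by
   injectivity of U every memory state on the cycle is I, and then a further
   use of injectivity forces every logical label to be I. *)
From HB Require Import structures.
From mathcomp Require Import all_boot all_order all_algebra.
Set Implicit Arguments. Unset Strict Implicit. Unset Printing Implicit Defensive.
Import GRing.Theory.
Local Open Scope ring_scope.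

Section PauliAlgebra.
Variables a b : nat.
Implicit Types (A C : Pauli a) (B D : Pauli b).

Lemma tensL A B i : tens A B (lshift b i) = A i.
Proof. by rewrite /tens ffunE (unsplitK (inl i)). Qed.

Lemma tensR A B i : tens A B (rshift a i) = B i.
Proof. by rewrite /tens ffunE (unsplitK (inr i)). Qed.

Lemma tens_inj A B C D : tens A B = tens C D -> A = C /\ B = D.
Proof.
move/ffunP=> eqAB; split; apply/ffunP => i.
  by have := eqAB (lshift b i); rewrite !tensL.
by have := eqAB (rshift a i); rewrite !tensR.
Qed.

Lemma tensD A B C D : tens A B + tens C D = tens (A + C) (B + D).
Proof. by apply/ffunP => i; rewrite !ffunE; case: split => j; rewrite ffunE. Qed.

Lemma tens0 : tens (0 : Pauli a) (0 : Pauli b) = 0.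
Proof. by apply/ffunP => i; rewrite !ffunE; case: split => j; rewrite ffunE. Qed.

Lemma tens0D B D : tens (0 : Pauli a) (B + D) = tens 0 B + tens 0 D.
Proof. by rewrite tensD addr0. Qed.

Lemma sp_tens A B C D : sp (tens A B) (tens C D) = sp A C + sp B D.
Proof.
by rewrite /sp big_split_ord; congr (_ + _); apply: eq_bigr => i _;
  rewrite ?tensL ?tensR.
Qed.

End PauliAlgebra.

Lemma sp0r q (A : Pauli q) : sp A 0 = 0.
Proof. by rewrite /sp big1 // => i _; rewrite ffunE /= !mulr0 addr0. Qed.

Lemma sp0l q (A : Pauli q) : sp 0 A = 0.
Proof. by rewrite /sp big1 // => i _; rewrite ffunE /= !mul0r addr0. Qed.

Lemma sp_Ztype q (S T : Pauli q) : Ztype S -> Ztype T -> sp S T = 0.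
Proof.
move=> /forallP ZS /forallP ZT; rewrite /sp big1 // => i _.
by rewrite (eqP (ZS i)) (eqP (ZT i)) mul0r mulr0 addr0.
Qed.

Lemma weight_eq0 q (A : Pauli q) : (weight A == 0%N) = (A == 0).
Proof.
rewrite /weight cards_eq0; apply/eqP/eqP => [suppA0 | ->].
  apply/ffunP => i; rewrite ffunE; apply/eqP/negPn/negP => Ai.
  by have := in_set0 i; rewrite -suppA0 inE Ai.
by apply/setP => i; rewrite !inE ffunE eqxx.
Qed.

Lemma Ztype_Aanc n k (i : 'I_(n - k)) j : Ztype (Aanc i j).
Proof.
by rewrite /Aanc; case: eqP => _; apply/forallP => x; rewrite ffunE //; case: ifP.
Qed.

Section Clifford.
Variables (N N' : nat) (U : Pauli N -> Pauli N').
Hypothesis U_clifford : clifford U.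

Lemma clifford0 : U 0 = 0.
Proof.
case: U_clifford => UD _ _; apply: (addrI (U 0)).
by rewrite -UD !addr0.
Qed.

Lemma clifford_inj : injective U.
Proof. by case: U_clifford => _ [V UK _] _; exact: can_inj UK. Qed.

Lemma clifford_sum I (r : seq I) (P : pred I) (F : I -> Pauli N) :
  U (\sum_(i <- r | P i) F i) = \sum_(i <- r | P i) U (F i).
Proof. by case: U_clifford => UD _ _; exact: (big_morph U UD clifford0). Qed.

End Clifford.

Section Encoder.
Variables (n k m : nat) (l : 'I_(n - k) -> nat) (h : 'I_(n - k) -> nat -> Pauli n).
Variables (g : 'I_(n - k) -> nat -> Pauli m).
Variable U : Pauli (m + (n - k) + k) -> Pauli (n + m).
Hypotheses (U_clifford : clifford U) (U_implements : implements l h g U).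

Lemma sp_memory_step i j s S L s' :
  Ztype S -> U (tens (tens s S) L) = tens 0 s' ->
  sp s' (gf l g i j.+1) = sp s (gf l g i j).
Proof.
move=> ZS edge; have [jl | lj] := ltnP j (l i); last first.
  by rewrite /gf !ltnNge (leqW lj) lj !andbF !sp0r.
case: U_clifford => _ _ Usp.
have := Usp (tens (tens s S) L) (row_in l g i j).
rewrite edge U_implements // !sp_tens sp0l sp0r (sp_Ztype ZS (Ztype_Aanc i j)).
by rewrite !add0r !addr0.
Qed.

Lemma zero_weight_cycle_inC N (s : nat -> Pauli m) (S : nat -> Pauli (n - k))
    (L : nat -> Pauli k) :
  (0 < N)%N -> s N = s 0%N ->
  (forall t, (t < N)%N -> Ztype (S t) /\
     U (tens (tens (s t) (S t)) (L t)) = tens 0 (s t.+1)) ->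
  forall t, (t <= N)%N -> inC l g (s t).
Proof.
move=> N_gt0 sN edge.
have sp_gf i j t : (t <= N)%N -> sp (s t) (gf l g i j) = 0.
  elim: j t => [|j IHj] t tN; first by rewrite /gf ltnn sp0r.
  have step t' : (t' < N)%N -> sp (s t'.+1) (gf l g i j.+1) = 0.
    move=> t'N; have [ZS edge_t'] := edge t' t'N.
    by rewrite (sp_memory_step i j ZS edge_t') IHj // ltnW.
  case: t tN => [|t] tN; last exact: step.
  by rewrite -sN -(prednK N_gt0) step // prednK.
move=> t tN i j jl; have := sp_gf i j t tN.
by rewrite /gf jl.
Qed.

Variables (a : nat) (M : 'I_a -> Pauli m).
Hypotheses (M_span : forall P, inC l g P -> exists c : 'I_a -> bool,
                       P = \sum_(t < a | c t) M t)
           (U_added : forall t : 'I_a, U (tens (tens 0 0) (PX k t)) = tens 0 (M t)).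

Lemma inC_added_rows P : inC l g P ->
  exists z, U (tens (tens 0 0) z) = tens 0 P.
Proof.
case/M_span=> c ->; exists (\sum_(t < a | c t) PX k t).
rewrite tens0 (big_morph _ (@tens0D _ _) (tens0 _ _)) clifford_sum //.
rewrite (big_morph _ (@tens0D _ _) (tens0 _ _)).
by apply: eq_bigr => t _; rewrite -U_added tens0.
Qed.

Lemma zero_weight_edge_to_C s S L s' :
  inC l g s' -> U (tens (tens s S) L) = tens 0 s' -> s = 0.
Proof.
case/inC_added_rows=> z <- /(clifford_inj U_clifford).
by case/tens_inj=> /tens_inj[].
Qed.

End Encoder.

Theorem theorem4 (n k : nat) (l : 'I_(n - k) -> nat)
    (h : 'I_(n - k) -> nat -> Pauli n) (m : nat)
    (g : 'I_(n - k) -> nat -> Pauli m) (a : nat) (M : 'I_a -> Pauli m) :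
  valid_code l h ->
  (\rank (Omega_mx l h) < #|{: OIdx l}|)%N ->
  consistent_with_Omega l h g ->
  S1_empty l h g ->
  complete_basis_C l g M ->
  (k <= n)%N ->
  (a <= k)%N ->
  forall U : Pauli (m + (n - k) + k) -> Pauli (n + m),
    clifford U ->
    implements l h g U ->
    (forall t : 'I_a, U (tens (tens 0 0) (PX k t)) = tens 0 (M t)) ->
    ~ catastrophic U.
Proof.
move=> _ _ _ _ [_ [M_span _]] _ _ U U_cl U_imp U_added.
case=> N [s [S [L [P [N_gt0 sN edge P_weight [t0 t0N L_weight]]]]]].
have P0 t : (t < N)%N -> P t = 0 by move/P_weight/eqP; rewrite weight_eq0 => /eqP.
have edge0 t : (t < N)%N -> Ztype (S t) /\
    U (tens (tens (s t) (S t)) (L t)) = tens 0 (s t.+1).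
  by move=> tN; rewrite -(P0 t tN); exact: edge.
have s_inC := zero_weight_cycle_inC U_cl U_imp N_gt0 sN edge0.
have s0_lt t : (t < N)%N -> s t = 0.
  move=> tN; have [_ edge_t] := edge0 t tN.
  exact: (zero_weight_edge_to_C U_cl M_span U_added (s_inC _ tN) edge_t).
have s0 t : (t <= N)%N -> s t = 0.
  by rewrite leq_eqVlt => /predU1P[-> | /s0_lt //]; rewrite sN s0_lt.
have [_ edge_t0] := edge0 t0 t0N.
move: edge_t0 L_weight; rewrite !s0 ?(ltnW t0N) // tens0 -(clifford0 U_cl).
move/(clifford_inj U_cl); rewrite -(tens0 (m + (n - k)) k) => /tens_inj[_ ->].
by rewrite weight_eq0 eqxx.
Qed.
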